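(* Let $P$ be a treetope with base $B$, and let $F$ be a nonempty face of $B$. Then there is exactly one face $F'$ of $P$ such that $F'\ne F$ and $F'\cap B=F$.
   Context: A polytope is the convex hull of a finite set of points in a Euclidean space; faces, vertices, edges, facets and the graph (1-skeleton) are as usual. A \emph{treetope} is a polytope $P$ together with a distinguished facet $B$ (the \emph{base}) such that every face $F$ of $P$ whose intersection $F\cap B$ consists of at most one point has dimension at most one. The face $F'$ in the statement is called the \emph{lift} of $F$. *)

From HB Require Import structures.
From mathcomp Require Import all_boot all_order all_algebra.
Set Implicit Arguments. Unset Strict Implicit. Unset Printing Implicit Defensive.
Import Order.TTheory GRing.Theory Num.Theory.
Local Open Scope ring_scope.

Section Polytopes.
Variables (R : realFieldType) (n : nat).
Notation vec := 'rV[R]_n.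

Definition pset := vec -> Prop.

Definition seteq (S T : pset) : Prop := forall x, S x <-> T x.

Definition psetI (S T : pset) : pset := fun x => S x /\ T x.

Definition dotv (a x : vec) : R := \sum_(i < n) a 0 i * x 0 i.

Definition conv (V : seq vec) : pset :=
  fun x => exists lam : 'I_(size V) -> R,
    (forall i, 0 <= lam i) /\ \sum_i lam i = 1 /\
    x = \sum_i lam i *: V`_i.

(* a face of S: intersection of S with the boundary hyperplane of a valid
   linear inequality (a = 0, b = 0 gives S itself; the empty face is allowed) *)
Definition is_face (S F : pset) : Prop :=
  exists (a : vec) (b : R),
    (forall x, S x -> dotv a x <= b) /\
    seteq F (fun x => S x /\ dotv a x = b).

(* matrix of differences x_i - x_0 of a finite list of points; its rank is the
   dimension of the affine hull of the list *)
Definition diffmx (s : seq vec) : 'M[R]_(size s, n) :=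
  \matrix_(i < size s) (s`_i - s`_0).

Definition in_set (S : pset) (s : seq vec) : Prop := forall x, x \in s -> S x.

(* affine dimension of S is at most k (vacuous for the empty set, dim -1) *)
Definition dim_le (S : pset) (k : nat) : Prop :=
  forall s, in_set S s -> (\rank (diffmx s) <= k)%N.

Definition has_dim (S : pset) (k : nat) : Prop :=
  (exists x, S x) /\ dim_le S k /\
  exists s, in_set S s /\ \rank (diffmx s) = k.

Definition is_facet (S B : pset) : Prop :=
  is_face S B /\ exists k, has_dim S k.+1 /\ has_dim B k.

Definition at_most_one_point (S : pset) : Prop :=
  forall x y, S x -> S y -> x = y.

Definition treetope (P B : pset) : Prop :=
  is_facet P B /\
  forall F, is_face P F -> at_most_one_point (psetI F B) -> dim_le F 1.

End Polytopes.

(* Write the base as [c x = d] and [F] as its intersection with [a x = b],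
   where [a x <= b] is valid on the whole polytope, and for a vertex [v] off
   the base let r(v) = (a v - b) / (d - c v): the slope by which [a x <= b]
   must be tilted about [c x = d] to reach [v].  Tilting by the maximum [M]
   of [r] gives a face [F'] with [F' ∩ B = F] whose vertices off the base are
   those where [r = M].
   Conversely let [G] be any face with [G ∩ B = F], [G <> F], and [W] the
   vertex of [F] farthest from the origin.  If a functional constant on [F]
   had two different ratios at vertices of [G] off the base, tilting the
   inequality of [G] up to the first breakpoint of a one-parameter family
   would give a face meeting the base in the single point [W] and containing
   [W] and two vertices not collinear with it, which the treetope property
   forbids.  So every such functional has constant ratio on the vertices of
   [G] off the base; a second breakpoint argument shows [r = M] there, and
   applied to the functional of [F'] this shows that [G] and [F'] have the
   same vertices. *)

From Pilot Require Import Defs.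
From HB Require Import structures.
From mathcomp Require Import all_boot all_order all_algebra.
From mathcomp Require Import ring lra.
Import Order.TTheory GRing.Theory Num.Theory.
Local Open Scope ring_scope.

Set Implicit Arguments. Unset Strict Implicit. Unset Printing Implicit Defensive.

Section DotProduct.
Variables (R : realFieldType) (n : nat).
Implicit Types (k : R) (a x y w : 'rV[R]_n).

Lemma dotvDr a x y : dotv a (x + y) = dotv a x + dotv a y.
Proof. by rewrite /dotv -big_split; apply: eq_bigr => i _; rewrite mxE mulrDr. Qed.

Lemma dotvZr a k x : dotv a (k *: x) = k * dotv a x.
Proof. by rewrite /dotv mulr_sumr; apply: eq_bigr => i _; rewrite mxE mulrCA. Qed.

Lemma dotvNr a x : dotv a (- x) = - dotv a x.
Proof. by rewrite -scaleN1r dotvZr mulN1r. Qed.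

Lemma dotvBr a x y : dotv a (x - y) = dotv a x - dotv a y.
Proof. by rewrite dotvDr dotvNr. Qed.

Lemma dotvC a x : dotv a x = dotv x a.
Proof. by apply: eq_bigr => i _; rewrite mulrC. Qed.

Lemma dotvDl a1 a2 x : dotv (a1 + a2) x = dotv a1 x + dotv a2 x.
Proof. by rewrite dotvC dotvDr -!(dotvC x). Qed.

Lemma dotvZl k a x : dotv (k *: a) x = k * dotv a x.
Proof. by rewrite dotvC dotvZr dotvC. Qed.

Lemma dotvNl a x : dotv (- a) x = - dotv a x.
Proof. by rewrite -scaleN1r dotvZl mulN1r. Qed.

Lemma dotv0l x : dotv 0 x = 0.
Proof. by rewrite -(scale0r 0) dotvZl mul0r. Qed.

Lemma dotv_sumr (I : finType) a (l : I -> R) (v : I -> 'rV[R]_n) :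
  dotv a (\sum_i l i *: v i) = \sum_i l i * dotv a (v i).
Proof.
elim/big_rec2: _ => [|i s1 s2 _ <-]; last by rewrite dotvDr dotvZr.
by rewrite dotvC dotv0l.
Qed.

Lemma dotvv_ge0 x : 0 <= dotv x x.
Proof. by apply: sumr_ge0 => i _; rewrite -expr2 sqr_ge0. Qed.

Lemma dotvv_eq0 x : dotv x x = 0 -> x = 0.
Proof.
move=> /eqP; rewrite psumr_eq0 => [/allP x0|i _]; last by rewrite -expr2 sqr_ge0.
apply/rowP => j; have /= := x0 j (mem_index_enum j).
by rewrite mulf_eq0 orbb mxE => /eqP.
Qed.

Lemma dotv_sub_le0 w x : dotv x x <= dotv w w -> dotv w (x - w) <= 0.
Proof.
move=> le_xw; have := dotvv_ge0 (x - w).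
rewrite !dotvBr !(dotvC (x - w)) !dotvBr (dotvC x w); lra.
Qed.

Lemma dotv_sub_eq0 w x : dotv x x <= dotv w w -> dotv w (x - w) = 0 -> x = w.
Proof.
move=> le_xw; rewrite dotvBr => eq_wx; apply/eqP; rewrite -subr_eq0; apply/eqP.
apply: dotvv_eq0; apply/eqP; rewrite eq_le dotvv_ge0 andbT.
rewrite !dotvBr !(dotvC (x - w)) !dotvBr (dotvC x w); lra.
Qed.

End DotProduct.

Section FiniteOptimization.
Variables (R : realFieldType) (T : finType) (P : pred T).

Lemma exists_dominating_multiple (p q : T -> R) :
  (forall i, P i -> 0 < q i) -> exists M, forall i, P i -> p i - M * q i < 0.
Proof.
move=> q_gt0; exists (1 + \sum_(i | P i) `|p i| / q i) => i Pi.
have qi_gt0 := q_gt0 i Pi.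
have le_pi : `|p i| / q i <= \sum_(j | P j) `|p j| / q j.
  rewrite (bigD1 i) //= lerDl; apply: sumr_ge0 => j /andP [Pj _].
  by rewrite divr_ge0 // ltW // q_gt0.
rewrite subr_lt0; apply: (@lt_le_trans _ _ ((1 + `|p i| / q i) * q i)).
  rewrite mulrDl mul1r mulfVK ?gt_eqF //.
  by apply: (le_lt_trans (ler_norm _)); rewrite ltrDr.
by rewrite ler_pM2r // lerD2l.
Qed.

(* Increasing [tau] from 0, the first [tau] at which some [j] with [q j > q i0]
   catches up with [i0] in [p + tau * q]. *)
Lemma exists_breakpoint (p q : T -> R) (i0 : T) :
  P i0 -> (forall i, P i -> p i <= p i0) -> (exists j, P j /\ q i0 < q j) ->
  exists tau j, [/\ 0 <= tau, P j, q i0 < q j,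
    (forall i, P i -> p i + tau * q i <= p i0 + tau * q i0) &
    p j + tau * q j = p i0 + tau * q i0].
Proof.
move=> Pi0 p_max [j0 [Pj0 lt_j0]].
pose K i := P i && (q i0 < q i).
pose cross i := (p i0 - p i) / (q i - q i0).
have Kj0 : K j0 by rewrite /K Pj0.
have [j /andP [Pj lt_j] j_min] := arg_minP cross Kj0.
have qj_gt0 : 0 < q j - q i0 by rewrite subr_gt0.
have tau_ge0 : 0 <= cross j by rewrite divr_ge0 ?subr_ge0 ?p_max // ltW.
exists (cross j), j; split => //.
- move=> i Pi; case: (ltP (q i0) (q i)) => [lt_i|ge_i].
    have qi_gt0 : 0 < q i - q i0 by rewrite subr_gt0.
    have := j_min i; rewrite /K Pi lt_i => /(_ isT).
    rewrite {2}/cross ler_pdivlMr // mulrBr; lra.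
  by rewrite lerD ?p_max // ler_wpM2l.
- have : cross j * (q j - q i0) = p i0 - p j by rewrite divfK // gt_eqF.
  rewrite mulrBr; lra.
Qed.

End FiniteOptimization.

Lemma diffmx3_collinear (R : realFieldType) (n : nat) (w v v' : 'rV[R]_n) :
  (\rank (Defs.diffmx [:: w; v; v']) <= 1)%N -> v - w != 0 ->
  exists k, v' - w = k *: (v - w).
Proof.
set D := Defs.diffmx _ => rkD vw_neq0.
have row1 : row (1 : 'I_3) D = v - w by rewrite rowK.
have row2 : row (2 : 'I_3) D = v' - w by rewrite rowK.
have rowD1 : (v - w <= D)%MS by rewrite -row1 row_sub.
have rowD2 : (v' - w <= D)%MS by rewrite -row2 row_sub.
have D_sub : (D <= v - w)%MS.
  have := mxrank_leqif_sup rowD1; rewrite rank_rV vw_neq0 => /leqifP.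
  by case: ifP => // _ lt1D; move: rkD; rewrite leqNgt lt1D.
have /submxP [X ->] := submx_trans rowD2 D_sub.
by exists (X 0 0); rewrite {1}[X]mx11_scalar mul_scalar_mx.
Qed.

Section Vertices.
Variables (R : realFieldType) (n : nat) (V : seq 'rV[R]_n).
Notation N := (size V).
Notation pt i := (V`_(nat_of_ord i)).
Implicit Types (k g : 'rV[R]_n) (h e : R) (x w : 'rV[R]_n).

Definition valid_ineq k h := forall i : 'I_N, dotv k (pt i) <= h.

Definition hface k h : pset R n := fun x => conv V x /\ dotv k x = h.

Lemma conv_pt (i : 'I_N) : conv V (pt i).
Proof.
exists (fun j => (j == i)%:R); split; first by move=> j; rewrite ler0n.
split; first by rewrite (bigD1 i) //= eqxx big1 ?addr0 // => j /negbTE ->.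
rewrite (bigD1 i) //= eqxx scale1r big1 ?addr0 // => j /negbTE ->.
by rewrite scale0r.
Qed.

Lemma hface_pt k h (i : 'I_N) : hface k h (pt i) <-> dotv k (pt i) = h.
Proof. by split=> [[]|] //; split=> //; exact: conv_pt. Qed.

Lemma dotv_conv_sub k h (lam : 'I_N -> R) : \sum_i lam i = 1 ->
  dotv k (\sum_i lam i *: pt i) - h = \sum_i lam i * (dotv k (pt i) - h).
Proof.
move=> lam_sum1; under [RHS]eq_bigr do rewrite mulrBr.
by rewrite sumrB -mulr_suml lam_sum1 mul1r dotv_sumr.
Qed.

Lemma conv_le k h x : valid_ineq k h -> conv V x -> dotv k x <= h.
Proof.
move=> kh [lam [lam_ge0 [lam_sum1 ->]]]; rewrite -subr_le0 dotv_conv_sub //.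
rewrite -oppr_ge0 -sumrN; apply: sumr_ge0 => i _.
by rewrite -mulrN mulr_ge0 // oppr_ge0 subr_le0.
Qed.

Lemma dotv_conv_eq k h (lam : 'I_N -> R) :
  (forall i, 0 <= lam i) -> \sum_i lam i = 1 ->
  (forall i, 0 < lam i -> dotv k (pt i) <= h) ->
  dotv k (\sum_i lam i *: pt i) = h <-> forall i, 0 < lam i -> dotv k (pt i) = h.
Proof.
move=> lam_ge0 lam_sum1 kh.
have term_ge0 i : 0 <= - (lam i * (dotv k (pt i) - h)).
  have := lam_ge0 i; rewrite le_eqVlt => /predU1P [<-|lam_gt0].
    by rewrite mul0r oppr0.
  by rewrite -mulrN mulr_ge0 // oppr_ge0 subr_le0 kh.
split => [/eqP|all_tight].
  rewrite -subr_eq0 dotv_conv_sub // -oppr_eq0 -sumrN psumr_eq0 // => /allP tight.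
  move=> i lam_gt0; apply/eqP; rewrite -subr_eq0.
  have /= := tight i (mem_index_enum i).
  by rewrite oppr_eq0 mulf_eq0 gt_eqF.
apply/eqP; rewrite -subr_eq0 dotv_conv_sub // -oppr_eq0 -sumrN; apply/eqP.
apply: big1 => i _; have := lam_ge0 i; rewrite le_eqVlt => /predU1P [<-|].
  by rewrite mul0r oppr0.
by move/all_tight => ->; rewrite subrr mulr0 oppr0.
Qed.

Lemma hface_face k h : valid_ineq k h -> is_face (conv V) (hface k h).
Proof. by move=> kh; exists k, h; split=> // x; exact: conv_le. Qed.

Lemma is_faceP S : is_face (conv V) S ->
  exists k h, valid_ineq k h /\ seteq S (hface k h).
Proof. by move=> [k [h [kh S_eq]]]; exists k, h; split=> // i; apply/kh/conv_pt. Qed.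

Lemma hface_sub k h g e x : valid_ineq k h -> valid_ineq g e ->
  (forall i : 'I_N, dotv k (pt i) = h -> dotv g (pt i) = e) ->
  hface k h x -> hface g e x.
Proof.
move=> kh ge sub [[lam [lam_ge0 [lam_sum1 ->]]] kx]; split; first by exists lam.
apply/dotv_conv_eq => // i lam_gt0; apply: sub.
by move: i lam_gt0; apply/dotv_conv_eq.
Qed.

Lemma hface_eq k h g e : valid_ineq k h -> valid_ineq g e ->
  (forall i : 'I_N, dotv k (pt i) = h <-> dotv g (pt i) = e) ->
  seteq (hface k h) (hface g e).
Proof. by move=> kh ge eq_tight x; split; apply: hface_sub => // i /eq_tight. Qed.

Lemma hface_has_vertex k h x : valid_ineq k h -> hface k h x ->
  exists i : 'I_N, dotv k (pt i) = h.
Proof.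
move=> kh [[lam [lam_ge0 [lam_sum1 ->]]] /dotv_conv_eq tight].
case: (pickP (fun i => 0 < lam i)) => [i lam_gt0|lam_le0].
  by exists i; apply: tight.
suff : \sum_i lam i = 0 by rewrite lam_sum1 => /eqP; rewrite oner_eq0.
by apply: big1 => i _; apply/eqP; rewrite eq_le lam_ge0 andbT leNgt lam_le0.
Qed.

Lemma hface_point k h w x : valid_ineq k h ->
  (forall i : 'I_N, dotv k (pt i) = h -> pt i = w) -> hface k h x -> x = w.
Proof.
move=> kh only_w [[lam [lam_ge0 [lam_sum1 ->]]] /dotv_conv_eq tight].
transitivity (\sum_i lam i *: w); last by rewrite -scaler_suml lam_sum1 scale1r.
apply: eq_bigr => i _; have := lam_ge0 i; rewrite le_eqVlt => /predU1P [<-|].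
  by rewrite !scale0r.
by move=> lam_gt0; rewrite only_w // tight.
Qed.

Lemma hfaceI k h g e : valid_ineq k h -> valid_ineq g e ->
  seteq (psetI (hface k h) (hface g e)) (hface (k + g) (h + e)).
Proof.
move=> kh ge x; rewrite /psetI /hface dotvDl.
split=> [[[Px ->] [_ ->]] //|[Px sum_eq]].
have := conv_le kh Px; have := conv_le ge Px.
by split; split=> //; lra.
Qed.

(* Adding a large multiple of a valid inequality [g x <= e] to an inequality
   that is valid on the vertices of the face [g x = e] yields a valid
   inequality defining a subface of it. *)
Lemma valid_restrict g e k h : valid_ineq g e ->
  (forall i : 'I_N, dotv g (pt i) = e -> dotv k (pt i) <= h) ->
  exists M, valid_ineq (k + M *: g) (h + M * e) /\
    forall i : 'I_N, dotv (k + M *: g) (pt i) = h + M * e <->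
      dotv g (pt i) = e /\ dotv k (pt i) = h.
Proof.
move=> ge kh.
have slack_gt0 (i : 'I_N) : dotv g (pt i) < e -> 0 < e - dotv g (pt i).
  by rewrite subr_gt0.
have [M M_big] := @exists_dominating_multiple _ _ (fun i : 'I_N => dotv g (pt i) < e)
  (fun i => dotv k (pt i) - h) (fun i => e - dotv g (pt i)) slack_gt0.
have gap (i : 'I_N) : dotv (k + M *: g) (pt i) - (h + M * e) =
    dotv k (pt i) - h - M * (e - dotv g (pt i)).
  by rewrite dotvDl dotvZl; ring.
suff tilted (i : 'I_N) : dotv (k + M *: g) (pt i) - (h + M * e) <= 0 /\
    (dotv (k + M *: g) (pt i) - (h + M * e) = 0 <->
      dotv g (pt i) = e /\ dotv k (pt i) = h).
  exists M; split=> i; first by rewrite -subr_le0; case: (tilted i).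
  case: (tilted i) => _ <-.
  by split=> [->|/subr0_eq]; rewrite ?subrr.
rewrite gap; have := ge i; rewrite le_eqVlt => /predU1P [gi|gi].
  rewrite gi subrr mulr0 subr0 subr_le0 kh //.
  by split=> //; split=> [/subr0_eq|[_ ->]]; rewrite ?subrr.
have := M_big i gi => lt0; split; first exact: ltW.
by split=> [eq0|[eq_g _]]; [move: lt0; rewrite eq0 ltxx | move: gi; rewrite eq_g ltxx].
Qed.

End Vertices.

Section Facet.
Variables (R : realFieldType) (n : nat) (V : seq 'rV[R]_n) (c : 'rV[R]_n) (d : R).
Hypothesis Hc : valid_ineq V c d.
Notation N := (size V).
Notation pt i := (V`_(nat_of_ord i)).
Implicit Types (al g k w x y : 'rV[R]_n) (be h e m : R).

(* The slope by which [al x <= be] must be tilted about the hyperplane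
   [c x = d] to pass through a point [x] with [c x < d]. *)
Definition ratio al be x := (dotv al x - be) / (d - dotv c x).

Definition off_facet_tight g h : pred 'I_N :=
  fun i => (dotv c (pt i) < d) && (dotv g (pt i) == h).

Lemma ratioD al1 al2 be1 be2 t x :
  ratio (al1 + t *: al2) (be1 + t * be2) x = ratio al1 be1 x + t * ratio al2 be2 x.
Proof. by rewrite /ratio dotvDl dotvZl mulrA -mulrDl; congr (_ / _); ring. Qed.

Lemma ratioN al be x : ratio (- al) (- be) x = - ratio al be x.
Proof. by rewrite /ratio dotvNl -opprD mulNr. Qed.

Lemma ratio_le0 al be x : dotv al x <= be -> dotv c x < d -> ratio al be x <= 0.
Proof. by move=> al_x c_x; rewrite /ratio ler_pdivrMr ?subr_gt0 // mul0r subr_le0. Qed.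

Lemma ratio_eq0 al be x : dotv c x < d -> ratio al be x = 0 -> dotv al x = be.
Proof.
move=> c_x /eqP; rewrite /ratio mulf_eq0 invr_eq0 !subr_eq0 => /orP [/eqP //|].
by rewrite eq_sym (lt_eqF c_x).
Qed.

Lemma ratio_collinear al w x y kap : dotv c w = d -> dotv c x < d ->
  x - w = kap *: (y - w) -> ratio al (dotv al w) x = ratio al (dotv al w) y.
Proof.
move=> c_w c_x x_w; rewrite /ratio -!dotvBr -c_w.
have -> : dotv c w - dotv c x = - dotv c (x - w) by rewrite dotvBr opprB.
have -> : dotv c w - dotv c y = - dotv c (y - w) by rewrite dotvBr opprB.
have kap_neq0 : kap != 0.
  apply: contraTneq c_x => kap0.
  suff -> : dotv c x = d by rewrite ltxx.
  by apply/eqP; rewrite -subr_eq0 -c_w -dotvBr x_w dotvZr kap0 mul0r.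
by rewrite x_w !dotvZr -mulrN invfM mulrACA divff // mul1r.
Qed.

Lemma tiltP al be m x : dotv c x <= d ->
  (dotv c x = d -> dotv al x <= be) -> (dotv c x < d -> ratio al be x <= m) ->
  dotv (al + m *: c) x <= be + m * d /\
  (dotv (al + m *: c) x = be + m * d <->
     dotv c x = d /\ dotv al x = be \/ dotv c x < d /\ ratio al be x = m).
Proof.
move=> c_x on_facet off_facet.
have gap : dotv (al + m *: c) x - (be + m * d) = dotv al x - be - m * (d - dotv c x).
  by rewrite dotvDl dotvZl; ring.
suff [le0 eq0] : dotv (al + m *: c) x - (be + m * d) <= 0 /\
    (dotv (al + m *: c) x - (be + m * d) = 0 <->
       dotv c x = d /\ dotv al x = be \/ dotv c x < d /\ ratio al be x = m).
  by rewrite -subr_le0 -eq0; split=> //; split=> [->|/subr0_eq]; rewrite ?subrr.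
rewrite gap; move: c_x; rewrite le_eqVlt => /predU1P [c_x|c_x].
  rewrite c_x subrr mulr0 subr0 subr_le0 on_facet //; split=> //.
  by split=> [/subr0_eq|[[_ ->]|[]]]; [left | rewrite subrr | rewrite ltxx].
have d_gt0 : 0 < d - dotv c x by rewrite subr_gt0.
have -> : dotv al x - be - m * (d - dotv c x) = (ratio al be x - m) * (d - dotv c x).
  by rewrite mulrBl /ratio divfK ?gt_eqF.
rewrite pmulr_lle0 // subr_le0 off_facet //; split=> //.
split=> [/eqP|[[c_d _]|[_ ->]]]; last by rewrite subrr mul0r.
  by rewrite mulf_eq0 (gt_eqF d_gt0) orbF subr_eq0 => /eqP; right.
by move: c_x; rewrite c_d ltxx.
Qed.

Lemma tilt_face g h al be m : valid_ineq V g h ->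
  (forall i : 'I_N, dotv c (pt i) = d -> dotv g (pt i) = h -> dotv al (pt i) <= be) ->
  (forall i : 'I_N, dotv c (pt i) < d -> dotv g (pt i) = h -> ratio al be (pt i) <= m) ->
  exists k e, valid_ineq V k e /\ forall i : 'I_N, dotv k (pt i) = e <->
    dotv g (pt i) = h /\ (dotv c (pt i) = d /\ dotv al (pt i) = be \/
                          dotv c (pt i) < d /\ ratio al be (pt i) = m).
Proof.
move=> gh on_facet off_facet.
have tilt (i : 'I_N) gi := tiltP (Hc i) (on_facet i ^~ gi) (off_facet i ^~ gi).
have [M [kM tight]] := valid_restrict gh (fun i gi => proj1 (tilt i gi)).
exists (al + m *: c + M *: g), (be + m * d + M * h); split=> // i.
rewrite tight; split=> [[gi /(proj2 (tilt i gi))]|[gi /(proj2 (tilt i gi))]] //.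
Qed.

Lemma face_of_facet B F : seteq B (hface V c d) -> is_face B F ->
  exists a b, [/\ valid_ineq V a b,
    forall i : 'I_N, dotv a (pt i) = b -> dotv c (pt i) = d & seteq F (hface V a b)].
Proof.
move=> EB [a [b [ab EF]]].
have a_on_facet (i : 'I_N) : dotv c (pt i) = d -> dotv a (pt i) <= b.
  by move=> ci; apply/ab/EB/hface_pt.
have [M [aM tight]] := valid_restrict Hc a_on_facet.
exists (a + M *: c), (b + M * d); split=> // [i /tight [] //|x].
rewrite EF EB; split=> [[[Px cx] ax]|aMx].
  by split=> //; rewrite dotvDl dotvZl ax cx.
have [Px cx] : hface V c d x by apply: hface_sub aM Hc _ aMx => i /tight [].
by split=> //; case: aMx => _; rewrite dotvDl dotvZl cx; lra.
Qed.

Lemma facet_vertex_off B (k : nat) : seteq B (hface V c d) ->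
  has_dim (conv V) k.+1 -> has_dim B k -> exists i : 'I_N, dotv c (pt i) < d.
Proof.
move=> EB [_ [_ [s [s_conv rk_s]]]] [_ [B_dim _]].
case: (pickP (fun i : 'I_N => dotv c (pt i) < d)) => [i ci|on_facet]; first by exists i.
have conv_B x : conv V x -> B x.
  have zero_valid : valid_ineq V 0 0 by move=> i; rewrite dotv0l.
  move=> Px; apply/EB; apply: (hface_sub zero_valid Hc) => [i _|].
    by have := Hc i; rewrite le_eqVlt on_facet orbF => /eqP.
  by split; rewrite ?dotv0l.
have := B_dim s (fun x xs => conv_B x (s_conv x xs)).
by rewrite rk_s ltnn.
Qed.

Section Lift.
Variables (a : 'rV[R]_n) (b : R).
Hypotheses (Ha : valid_ineq V a b)
  (a_facet : forall i : 'I_N, dotv a (pt i) = b -> dotv c (pt i) = d).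

(* [g x <= h] cuts out a lift of [F = {a x = b}]: a face of [conv V] other
   than [F] meeting the facet exactly in [F]. *)
Definition is_lift g h := [/\ valid_ineq V g h,
  forall i : 'I_N, dotv c (pt i) = d -> (dotv g (pt i) = h <-> dotv a (pt i) = b) &
  exists i : 'I_N, dotv c (pt i) < d /\ dotv g (pt i) = h].

Lemma lift_meet g h : is_lift g h ->
  seteq (psetI (hface V g h) (hface V c d)) (hface V a b).
Proof.
move=> [gh g_facet _] x; split=> [/(hfaceI gh Hc)|ax].
  have ghc : valid_ineq V (g + c) (h + d) by move=> i; rewrite dotvDl lerD.
  apply: hface_sub ghc Ha _ => i; rewrite dotvDl => gci.
  have := gh i; have := Hc i => ci gi.
  have ci' : dotv c (pt i) = d by lra.
  by apply/(g_facet i ci'); lra.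
split; last exact: hface_sub Ha Hc a_facet ax.
by apply: hface_sub Ha gh _ ax => i ai; apply/(g_facet _ (a_facet ai)).
Qed.

Lemma lift_neq g h : is_lift g h -> ~ seteq (hface V g h) (hface V a b).
Proof.
move=> [_ _ [i [ci gi]]] E.
have /E /hface_pt /a_facet ci' : hface V g h (pt i) by apply/hface_pt.
by move: ci; rewrite ci' ltxx.
Qed.

Lemma face_lift G : is_face (conv V) G ->
  seteq (psetI G (hface V c d)) (hface V a b) -> ~ seteq G (hface V a b) ->
  exists g h, is_lift g h /\ seteq G (hface V g h).
Proof.
move=> /is_faceP [g [h [gh EG]]] EGB G_neqF; exists g, h; split=> //.
have g_facet (i : 'I_N) : dotv c (pt i) = d -> (dotv g (pt i) = h <-> dotv a (pt i) = b).
  move=> ci; split=> [gi|ai].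
    by apply/hface_pt/EGB; split; [apply/EG|]; apply/hface_pt.
  by have [/EG /hface_pt] : psetI G (hface V c d) (pt i) by apply/EGB/hface_pt.
split=> //; case: (pickP (off_facet_tight g h)) => [i /andP [ci /eqP gi]|no_off].
  by exists i.
exfalso; apply: G_neqF => x; rewrite (EG x); move: x; apply: hface_eq => // i.
split=> [gi|ai]; last exact/(g_facet i (a_facet ai)).
have ci : dotv c (pt i) = d.
  have := Hc i; rewrite le_eqVlt => /predU1P [//|ci].
  by have := no_off i; rewrite /off_facet_tight ci gi eqxx.
exact/(g_facet i ci).
Qed.

Lemma tilt_lift al be m :
  (forall i : 'I_N, dotv c (pt i) = d ->
     dotv al (pt i) <= be /\ (dotv al (pt i) = be <-> dotv a (pt i) = b)) ->
  (forall i : 'I_N, dotv c (pt i) < d -> ratio al be (pt i) <= m) ->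
  (exists i : 'I_N, dotv c (pt i) < d /\ ratio al be (pt i) = m) ->
  exists k e, is_lift k e /\
    forall i : 'I_N, dotv c (pt i) < d -> (dotv k (pt i) = e <-> ratio al be (pt i) = m).
Proof.
move=> on_facet off_facet [i0 [ci0 ri0]].
have zero_valid : valid_ineq V 0 0 by move=> i; rewrite dotv0l.
have [k [e [ke tight]]] := tilt_face zero_valid
  (fun i ci _ => proj1 (on_facet i ci)) (fun i ci _ => off_facet i ci).
have off_tight (i : 'I_N) : dotv c (pt i) < d -> (dotv k (pt i) = e <-> ratio al be (pt i) = m).
  move=> ci; rewrite tight dotv0l.
  split=> [[_ [[ci' _]|[_ //]]]|rm]; last by split=> //; right.
  by move: ci; rewrite ci' ltxx.
exists k, e; split=> //; split=> //; last by exists i0; split=> //; apply/off_tight.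
move=> i ci; rewrite tight dotv0l -(proj2 (on_facet i ci)).
split=> [[_ [[_ //]|[]]]|ali]; last by split=> //; left.
by rewrite ci ltxx.
Qed.

Hypothesis tree : forall T, is_face (conv V) T ->
  at_most_one_point (psetI T (hface V c d)) -> dim_le T 1.

Section Farthest.
Variables (g : 'rV[R]_n) (h : R) (w : 'I_N).
Hypotheses (Hg : is_lift g h) (Fw : dotv a (pt w) = b)
  (w_far : forall i : 'I_N, dotv a (pt i) = b -> dotv (pt i) (pt i) <= dotv (pt w) (pt w)).
Notation W := (pt w).
Notation J := (off_facet_tight g h).

Lemma lift_on_facet (i : 'I_N) :
  dotv c (pt i) = d -> dotv g (pt i) = h -> dotv a (pt i) = b.
Proof. by case: Hg => _ g_facet _ ci /(g_facet i ci). Qed.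

(* The face cut out of [g x = h] by a tilted inequality that touches [F] only
   at its farthest vertex [W] meets the facet only in [W]; by the treetope
   property it is at most a segment, so the vertices it contains off the facet
   lie on a line through [W]. *)
Lemma tie_collinear al m i j :
  (forall k : 'I_N, dotv a (pt k) = b -> dotv al (pt k - W) = 0) ->
  (forall k : 'I_N, J k -> ratio (W + al) (dotv (W + al) W) (pt k) <= m) ->
  J i -> J j -> ratio (W + al) (dotv (W + al) W) (pt i) = m ->
  ratio (W + al) (dotv (W + al) W) (pt j) = m ->
  exists kap, pt j - W = kap *: (pt i - W).
Proof.
move=> alF ratio_le /andP [ci /eqP gi] /andP [cj /eqP gj] ri rj.
have [gh g_facet _] := Hg.
have cw : dotv c W = d by apply: a_facet.
have on_F (k : 'I_N) : dotv a (pt k) = b ->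
    dotv (W + al) (pt k) - dotv (W + al) W = dotv W (pt k - W).
  by move=> ak; rewrite -dotvBr dotvDl alF // addr0.
have below_on_facet (l : 'I_N) : dotv c (pt l) = d -> dotv g (pt l) = h ->
    dotv (W + al) (pt l) <= dotv (W + al) W.
  move=> cl gl; rewrite -subr_le0 on_F ?lift_on_facet //.
  exact/dotv_sub_le0/w_far/lift_on_facet.
have below_off_facet (l : 'I_N) : dotv c (pt l) < d -> dotv g (pt l) = h ->
    ratio (W + al) (dotv (W + al) W) (pt l) <= m.
  by move=> cl gl; apply: ratio_le; rewrite /off_facet_tight cl gl eqxx.
have [k [e [ke tight]]] := tilt_face gh below_on_facet below_off_facet.
have meetW x : psetI (hface V k e) (hface V c d) x -> x = W.
  have kc : valid_ineq V (k + c) (e + d) by move=> l; rewrite dotvDl lerD.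
  move/(hfaceI ke Hc); apply: hface_point kc _ => l; rewrite dotvDl => kcl.
  have := ke l; have := Hc l => cl kl.
  have kl' : dotv k (pt l) = e by lra.
  have cl' : dotv c (pt l) = d by lra.
  have [gl [[_ akl]|[]]] := iffLR (tight l) kl'; last by rewrite cl' ltxx.
  have a_l : dotv a (pt l) = b by exact: lift_on_facet.
  by apply: dotv_sub_eq0 (w_far a_l) _; rewrite -on_F // akl subrr.
have /tree : is_face (conv V) (hface V k e) by exact: hface_face.
move=> /(_ (fun x y Hx Hy => etrans (meetW x Hx) (esym (meetW y Hy)))).
move=> /(_ [:: W; pt i; pt j]) rk.
apply: diffmx3_collinear.
  apply: rk => x; rewrite !inE => /or3P [] /eqP ->; apply/hface_pt/tight.
  - by split; [apply/g_facet | left].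
  - by split=> //; right.
  - by split=> //; right.
by apply: contraTneq ci => /subr0_eq ->; rewrite cw ltxx.
Qed.

(* Otherwise tilting by [W + tau *: al] up to the first breakpoint would tie
   [i0] with a vertex [j'] of larger [al]-ratio, and [tie_collinear] forces
   equal ratios. *)
Lemma ratio_le_at_max al i0 :
  (forall k : 'I_N, dotv a (pt k) = b -> dotv al (pt k - W) = 0) -> J i0 ->
  (forall j, J j -> ratio W (dotv W W) (pt j) <= ratio W (dotv W W) (pt i0)) ->
  forall j, J j -> ratio al (dotv al W) (pt j) <= ratio al (dotv al W) (pt i0).
Proof.
move=> alF Ji0 i0_max j Jj; rewrite leNgt; apply/negP => lt_j.
pose p (l : 'I_N) := ratio W (dotv W W) (pt l).
pose q (l : 'I_N) := ratio al (dotv al W) (pt l).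
have [tau [j' [_ Jj' lt_j' tie_le tie_eq]]] :=
  @exists_breakpoint _ _ J p q i0 Ji0 i0_max (ex_intro _ j (conj Jj lt_j)).
have ratio_tilt (l : 'I_N) :
    ratio (W + tau *: al) (dotv (W + tau *: al) W) (pt l) = p l + tau * q l.
  by rewrite dotvDl dotvZl ratioD.
have [kap eq_kap] : exists kap, pt j' - W = kap *: (pt i0 - W).
  apply: (@tie_collinear (tau *: al) (p i0 + tau * q i0) i0 j' _ _ Ji0 Jj').
  - by move=> l ak; rewrite dotvZl alF ?mulr0.
  - by move=> l Jl; rewrite ratio_tilt tie_le.
  - by rewrite ratio_tilt.
  - by rewrite ratio_tilt tie_eq.
have cj' : dotv c (pt j') < d by case/andP: Jj'.
have cw : dotv c W = d by apply: a_facet.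
by move: lt_j'; rewrite /q (ratio_collinear al cw cj' eq_kap) ltxx.
Qed.

Lemma lift_ratio_eq_far al be u1 u2 :
  (forall k : 'I_N, dotv a (pt k) = b -> dotv al (pt k) = be) -> J u1 -> J u2 ->
  ratio al be (pt u1) = ratio al be (pt u2).
Proof.
move=> alF Ju1 Ju2.
have [i0 Ji0 i0_max] := arg_maxP (fun l : 'I_N => ratio W (dotv W W) (pt l)) Ju1.
have -> : be = dotv al W by rewrite alF.
have alF' s (l : 'I_N) : dotv a (pt l) = b -> dotv (s *: al) (pt l - W) = 0.
  by move=> ak; rewrite dotvZl dotvBr !alF // subrr mulr0.
have const (j : 'I_N) : J j -> ratio al (dotv al W) (pt j) = ratio al (dotv al W) (pt i0).
  move=> Jj; apply/eqP; rewrite eq_le ratio_le_at_max //=; last first.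
    by move=> l ak; have := alF' 1 l ak; rewrite scale1r.
  have := @ratio_le_at_max (-1 *: al) i0 (alF' _) Ji0 i0_max j Jj.
  by rewrite scaleN1r dotvNl !ratioN lerN2.
by rewrite !const.
Qed.

End Farthest.

Hypothesis F_vertex : exists i : 'I_N, dotv a (pt i) = b.

Lemma lift_ratio_eq g h al be u1 u2 : is_lift g h ->
  (forall k : 'I_N, dotv a (pt k) = b -> dotv al (pt k) = be) ->
  off_facet_tight g h u1 -> off_facet_tight g h u2 ->
  ratio al be (pt u1) = ratio al be (pt u2).
Proof.
move=> Hg alF Ju1 Ju2; have [i0 Fi0] := F_vertex.
have [w /eqP Fw w_far] := @arg_maxP _ _ _ i0 (fun i : 'I_N => dotv a (pt i) == b)
  (fun i => dotv (pt i) (pt i)) (introT eqP Fi0).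
have w_far' (i : 'I_N) : dotv a (pt i) = b -> dotv (pt i) (pt i) <= dotv (pt w) (pt w).
  by move/eqP; exact: w_far.
exact (lift_ratio_eq_far Hg Fw w_far' alF Ju1 Ju2).
Qed.

Lemma lift_ratio_max g h u : is_lift g h -> off_facet_tight g h u ->
  forall i : 'I_N, dotv c (pt i) < d -> ratio a b (pt i) <= ratio a b (pt u).
Proof.
move=> Hg Ju i ci; rewrite leNgt; apply/negP => lt_i.
have [gh g_facet _] := Hg; have /andP [cu /eqP gu] := Ju.
pose p (l : 'I_N) := ratio g h (pt l).
pose q (l : 'I_N) := ratio a b (pt l).
have p_max l : dotv c (pt l) < d -> p l <= p u.
  by move=> cl; rewrite /p {2}/ratio gu subrr mul0r ratio_le0.
have [tau [j [tau_ge0 cj lt_j tie_le tie_eq]]] :=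
  @exists_breakpoint _ _ (fun l : 'I_N => dotv c (pt l) < d) p q u cu p_max
    (ex_intro _ i (conj ci lt_i)).
have ratio_tilt (l : 'I_N) : ratio (g + tau *: a) (h + tau * b) (pt l) = p l + tau * q l.
  exact: ratioD.
have on_facet (l : 'I_N) : dotv c (pt l) = d ->
    dotv (g + tau *: a) (pt l) <= h + tau * b /\
    (dotv (g + tau *: a) (pt l) = h + tau * b <-> dotv a (pt l) = b).
  move=> cl; have := gh l; have := Ha l.
  have : 0 <= tau * (b - dotv a (pt l)) by rewrite mulr_ge0 // subr_ge0.
  rewrite dotvDl dotvZl mulrBr => ta a_le g_le; split; first lra.
  split=> [sum_eq|a_eq]; first by apply/(g_facet l cl); lra.
  by rewrite a_eq (iffRL (g_facet l cl) a_eq).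
have off_facet (l : 'I_N) : dotv c (pt l) < d ->
    ratio (g + tau *: a) (h + tau * b) (pt l) <= p u + tau * q u.
  by move=> cl; rewrite ratio_tilt tie_le.
have [k [e [Hk k_off]]] :=
  tilt_lift on_facet off_facet (ex_intro _ u (conj cu (ratio_tilt u))).
have Ju' : off_facet_tight k e u.
  by rewrite /off_facet_tight cu (iffRL (k_off u cu)) ?ratio_tilt ?eqxx.
have Jj' : off_facet_tight k e j.
  by rewrite /off_facet_tight cj (iffRL (k_off j cj)) ?ratio_tilt ?tie_eq ?eqxx.
have := lift_ratio_eq Hk (fun _ ak => ak) Ju' Jj'.
by move=> eq_uj; move: lt_j; rewrite /q eq_uj ltxx.
Qed.

Lemma lift_tight_off g h M : is_lift g h ->
  (forall i : 'I_N, dotv c (pt i) < d -> ratio a b (pt i) <= M) ->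
  (exists i : 'I_N, dotv c (pt i) < d /\ ratio a b (pt i) = M) ->
  forall i : 'I_N, dotv c (pt i) < d -> (dotv g (pt i) = h <-> ratio a b (pt i) = M).
Proof.
move=> Hg M_max M_hit; have [gh g_facet [u [cu gu]]] := Hg.
have Ju : off_facet_tight g h u by rewrite /off_facet_tight cu gu eqxx.
have uM : ratio a b (pt u) = M.
  apply/eqP; rewrite eq_le M_max //; have [i [ci <-]] := M_hit.
  exact: lift_ratio_max Hg Ju i ci.
have [k [e [Hk k_off]]] := @tilt_lift a b M (fun l _ => conj (Ha l) (iff_refl _)) M_max M_hit.
have Jk (l : 'I_N) : dotv c (pt l) < d -> ratio a b (pt l) = M -> off_facet_tight k e l.
  by move=> cl lM; rewrite /off_facet_tight cl (iffRL (k_off l cl) lM) eqxx.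
move=> i ci; split=> [gi|iM].
  rewrite -uM; apply: lift_ratio_eq Hg (fun _ ak => ak) _ Ju.
  by rewrite /off_facet_tight ci gi eqxx.
have ru0 : ratio g h (pt u) = 0 by rewrite /ratio gu subrr mul0r.
have g_F (l : 'I_N) : dotv a (pt l) = b -> dotv g (pt l) = h.
  by move=> a_l; apply/(g_facet l (a_facet a_l)).
apply: (ratio_eq0 ci); rewrite -ru0.
exact: lift_ratio_eq Hk g_F (Jk i ci iM) (Jk u cu uM).
Qed.

Lemma unique_lift : (exists i : 'I_N, dotv c (pt i) < d) ->
  exists F', [/\ is_face (conv V) F', ~ seteq F' (hface V a b),
    seteq (psetI F' (hface V c d)) (hface V a b) &
    forall G, is_face (conv V) G -> ~ seteq G (hface V a b) ->
      seteq (psetI G (hface V c d)) (hface V a b) -> seteq G F'].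
Proof.
move=> [i0 ci0].
have [istar cstar star_max] := @arg_maxP _ _ _ i0 (fun i : 'I_N => dotv c (pt i) < d)
  (fun i => ratio a b (pt i)) ci0.
set M := ratio a b (pt istar) in star_max.
have M_hit : exists i : 'I_N, dotv c (pt i) < d /\ ratio a b (pt i) = M by exists istar.
have [k [e [Hk _]]] := @tilt_lift a b M (fun l _ => conj (Ha l) (iff_refl _)) star_max M_hit.
exists (hface V k e); split; [by case: Hk => ke _ _; exact: hface_face|
  exact: lift_neq|exact: lift_meet|].
move=> G G_face G_neq G_meet; have [g [h [Hg EG]]] := face_lift G_face G_meet G_neq.
move=> x; rewrite (EG x); move: x; have [gh g_facet _] := Hg; have [ke k_facet _] := Hk.
apply: hface_eq => // i; have := Hc i; rewrite le_eqVlt => /predU1P [ci|ci].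
  by rewrite g_facet // k_facet.
by rewrite (lift_tight_off Hg star_max M_hit ci) (lift_tight_off Hk star_max M_hit ci).
Qed.

End Lift.
End Facet.

Unset Implicit Arguments.

Theorem mainTheorem4 (R : realFieldType) (n : nat) (V : seq 'rV[R]_n)
    (B F : pset R n) :
  treetope (conv V) B ->
  is_face B F -> (exists x, F x) ->
  exists F' : pset R n,
    [/\ is_face (conv V) F', ~ seteq F' F, seteq (psetI F' B) F &
      forall G : pset R n, is_face (conv V) G -> ~ seteq G F ->
        seteq (psetI G B) F -> seteq G F'].
Proof.
move=> [[B_face [k [P_dim B_dim]]] tree] F_face [x0 Fx0].
have [c [d [Hc EB]]] := is_faceP B_face.
have [a [b [Ha a_facet EF]]] := face_of_facet Hc EB F_face.
have F_vertex := hface_has_vertex Ha (iffLR (EF x0) Fx0).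
have off_vertex := facet_vertex_off Hc EB P_dim B_dim.
have tree' T : is_face (conv V) T ->
    at_most_one_point (psetI T (hface V c d)) -> dim_le T 1.
  by move=> T_face T_one; apply: tree => // x y [Tx /EB Bx] [Ty /EB By]; exact: T_one.
have [F' [F'_face F'_neq F'_meet F'_uniq]] :=
  unique_lift Hc Ha a_facet tree' F_vertex off_vertex.
exists F'; split=> // [F'F|x|G G_face G_neq G_meet].
- by apply: F'_neq => x; rewrite (F'F x) (EF x).
- by rewrite (EF x) -(F'_meet x) /psetI (EB x).
- apply: F'_uniq => // [GF|x]; first by apply: G_neq => x; rewrite (GF x) -(EF x).
  by rewrite -(EF x) -(G_meet x) /psetI (EB x).
Qed.
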